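(* Any randomized algorithm for selection in the rank query model that runs in $k$ rounds and succeeds with probability at least $p$ on every input of length $n$ issues, on its worst-case input, at least $np\frac{k+1}{2k}-1$ queries in expectation.
   Context: Selection with rank queries: there is a vector $\vec{x}=(x_1,\ldots,x_n)$ whose ranks form an unknown permutation of $\{1,\ldots,n\}$; a rank $r$ is given and the goal is to output the index $i$ with $\mathrm{rank}(x_i)=r$. Queries have the form ''How is $\mathrm{rank}(x_j)$ compared to $m$?'', with answer ''$<$'', ''$=$'' or ''$>$''. An algorithm runs in $k$ rounds if in each of $k$ rounds it submits a set of queries chosen depending only on answers of earlier rounds (and its randomness), then receives all answers. A randomized algorithm is a distribution over deterministic algorithms; expectations are over its randomness. *)

From HB Require Import structures.
From mathcomp Require Import all_boot all_order all_algebra all_fingroup.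
From mathcomp Require Import all_classical all_reals all_analysis.
Set Implicit Arguments. Unset Strict Implicit. Unset Printing Implicit Defensive.
Import Order.TTheory GRing.Theory Num.Theory.
Local Open Scope ring_scope.

(* An input of length n: the ranks of x_1..x_n form a permutation of {1..n};
   rank(x_j) = (sigma j).+1 for sigma : {perm 'I_n}. *)
Definition rank (n : nat) (sigma : {perm 'I_n}) (j : 'I_n) : int := Posz (sigma j).+1.

(* A query "How is rank(x_j) compared to m?" *)
Definition query (n : nat) := ('I_n * int)%type.

Inductive answer := ALt | AEq | AGt.

Definition answer_of (n : nat) (sigma : {perm 'I_n}) (q : query n) : answer :=
  let r := rank sigma q.1 in
  if r < q.2 then ALt else if r == q.2 then AEq else AGt.

Definition transcript (n : nat) := seq (query n * answer).

(* Deterministic algorithm: in round t, the (multi)set of queries is chosen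
   from the transcript of earlier rounds; the output is chosen from the final
   transcript. *)
Record detalg (n : nat) := DetAlg {
  dround : nat -> transcript n -> seq (query n);
  dout : transcript n -> 'I_n }.

Fixpoint run (n : nat) (A : detalg n) (sigma : {perm 'I_n}) (t : nat) : transcript n :=
  match t with
  | 0 => [::]
  | t'.+1 => let h := run A sigma t' in
             h ++ [seq (q, answer_of sigma q) | q <- dround A t' h]
  end.

Definition cost (n k : nat) (A : detalg n) (sigma : {perm 'I_n}) : nat :=
  size (run A sigma k).

Definition succeeds (n k : nat) (r : nat) (A : detalg n) (sigma : {perm 'I_n}) : bool :=
  rank sigma (dout A (run A sigma k)) == Posz r.

(* A randomized algorithm: a (discrete) probability distribution over
   deterministic algorithms. *)
Record randalg (R : realType) (n : nat) := RandAlg {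
  ralg : nat -> detalg n;
  rweight : nat -> R;
  rweight_ge0 : forall i, 0 <= rweight i;
  rweight_sum1 : (\sum_(i <oo) (rweight i)%:E)%E = 1%E }.

Definition success_prob (R : realType) (n k r : nat) (B : randalg R n)
  (sigma : {perm 'I_n}) : \bar R :=
  (\sum_(i <oo) (rweight B i * (succeeds k r (ralg B i) sigma)%:R)%:E)%E.

Definition expected_cost (R : realType) (n k : nat) (B : randalg R n)
  (sigma : {perm 'I_n}) : \bar R :=
  (\sum_(i <oo) (rweight B i * (cost k (ralg B i) sigma)%:R)%:E)%E.

(* Fix a deterministic k-round algorithm and call target the position of rank
   r. Exchanging the target with a position not yet queried leaves the
   transcript unchanged, so over a uniformly random input the target, while not
   yet queried, is uniform over the u unqueried positions. With
   c = n(k+1)/(2k), the potential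
     (queries made while the target was hidden) + psi_{k-t}(u),
   where psi is replaced by -c once the target has been queried, therefore has
   nondecreasing mean over the rounds. It starts at psi_k(n) = -1, and at the
   end the success probability is at most the mean of 1/u (target hidden) or 1,
   so c Pr[success] <= E[cost] + 1. Averaging over the random choice of the
   algorithm and taking the input of largest expected cost gives the bound
   c p - 1. *)

From HB Require Import structures.
From mathcomp Require Import all_boot all_order all_algebra all_fingroup.
From mathcomp Require Import all_classical all_reals all_analysis.
From mathcomp Require Import ring lra zify.
Import Order.TTheory GRing.Theory Num.Theory.
Local Open Scope ring_scope.
Set Implicit Arguments. Unset Strict Implicit. Unset Printing Implicit Defensive.

Section Psi.
Variables (R : realFieldType) (c : R).

(* [psi c j u] lower-bounds, with [j] rounds left and the target uniform over
   [u] unqueried positions, the expected number of further queries made while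
   the target is hidden minus [c] times the success probability; [psi_step] is
   the one-round inequality behind this. *)
Definition psi (j u : nat) : R :=
  if j is j'.+1 then Num.min (u%:R * (j.+1%:R / (2 * j)%:R) - c - 1) (-1)
  else - c / u%:R.

Lemma psi_step_last (U S : R) : 0 <= S -> S + 1 <= U ->
  Num.min (U - c - 1) (-1) <= S - c * S / U + (1 - S / U) * (- c / (U - S)).
Proof.
move=> S0 SU; have U0 : U != 0 by rewrite gt_eqF //; lra.
have US0 : U - S != 0 by rewrite gt_eqF //; lra.
rewrite ge_min; apply/orP.
have [cU|cU] := lerP c U; [right | left]; rewrite -subr_ge0.
- have -> : S - c * S / U + (1 - S / U) * (- c / (U - S)) - -1 = (S + 1) * (U - c) / U.
    by field; rewrite U0 US0.
  by apply: divr_ge0; [apply: mulr_ge0|]; lra.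
- have -> : S - c * S / U + (1 - S / U) * (- c / (U - S)) - (U - c - 1)
      = (U - S - 1) * (c - U) / U.
    by field; rewrite U0 US0.
  by apply: divr_ge0; [apply: mulr_ge0|]; lra.
Qed.

Lemma psi_step_linear (U S J : R) : 0 < U -> 0 <= S -> S <= U -> 2 <= J ->
  U * ((J + 1) / (2 * J)) - c - 1 <=
  S - c * S / U + (1 - S / U) * ((U - S) * (J / (2 * (J - 1))) - c - 1).
Proof.
move=> U0 S0 SU J2; rewrite -subr_ge0.
have UN : U != 0 by rewrite gt_eqF.
have JN : J != 0 by rewrite gt_eqF //; lra.
have J1N : J - 1 != 0 by rewrite gt_eqF //; lra.
have -> : S - c * S / U + (1 - S / U) * ((U - S) * (J / (2 * (J - 1))) - c - 1)
   - (U * ((J + 1) / (2 * J)) - c - 1)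
   = ((J * S - U) ^+ 2 + 2 * J * (J - 1) * S) / (2 * J * (J - 1) * U).
  by field; rewrite UN JN J1N.
apply: divr_ge0; last by rewrite !mulr_ge0 //; lra.
by rewrite addr_ge0 ?sqr_ge0 // !mulr_ge0 //; lra.
Qed.

Lemma psi_step_capped (U S J : R) : 0 < U -> 0 <= S -> S <= U -> 1 <= J ->
  Num.min (U * ((J + 1) / (2 * J)) - c - 1) (-1) <= S - c * S / U - (1 - S / U).
Proof.
move=> U0 S0 SU J1.
have UN : U != 0 by rewrite gt_eqF.
have JN : J != 0 by rewrite gt_eqF //; lra.
rewrite ge_min; apply/orP.
have [cU|cU] := lerP c (U + 1); [right | left]; rewrite -subr_ge0.
- have -> : S - c * S / U - (1 - S / U) - -1 = S * (U - c + 1) / U by field.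
  by apply: divr_ge0; [apply: mulr_ge0|]; lra.
- have -> : S - c * S / U - (1 - S / U) - (U * ((J + 1) / (2 * J)) - c - 1)
      = (c - U - 1) * ((U - S) / U) + (U * (J - 1) / (2 * J) + 1).
    by field; rewrite UN JN.
  apply: addr_ge0; first by apply: mulr_ge0; [|apply: divr_ge0]; lra.
  by apply: addr_ge0; [apply: divr_ge0; [apply: mulr_ge0|]|]; lra.
Qed.

Lemma psi_step_succ (U S J : R) : 0 < U -> 0 <= S -> S <= U -> 2 <= J ->
  Num.min (U * ((J + 1) / (2 * J)) - c - 1) (-1) <=
  S - c * S / U + (1 - S / U) * Num.min ((U - S) * (J / (2 * (J - 1))) - c - 1) (-1).
Proof.
move=> U0 S0 SU J2.
have [_|_] := leP ((U - S) * (J / (2 * (J - 1))) - c - 1) (-1).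
  by rewrite ge_min psi_step_linear.
by rewrite mulrN1 psi_step_capped //; lra.
Qed.

Lemma psi_step (j u s : nat) : (0 < u)%N -> (s <= u)%N ->
  psi j.+1 u <= s%:R - c * s%:R / u%:R + (1 - s%:R / u%:R) * psi j (u - s).
Proof.
move=> u0 su; have U0 : 0 < (u%:R : R) by rewrite ltr0n.
have S0 : 0 <= (s%:R : R) by rewrite ler0n.
have SU : (s%:R : R) <= u%:R by rewrite ler_nat.
case: j => [|j] /=; rewrite natrB //.
  rewrite muln1 divff ?pnatr_eq0 // mulr1; have [->|s_neq_u] := eqVneq s u.
    rewrite divff ?gt_eqF // subrr mul0r addr0 ge_min mulrK ?unitfE ?gt_eqF //.
    by apply/orP; left; lra.
  apply: psi_step_last => //.
  by rewrite natr1 ler_nat ltn_neqAle s_neq_u.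
set J : R := j.+2%:R; have J2 : 2 <= J by rewrite ler_nat.
have -> : (j.+3%:R : R) = J + 1 by rewrite -natr1.
have -> : ((2 * j.+2)%:R : R) = 2 * J by rewrite natrM.
have -> : ((2 * j.+1)%:R : R) = 2 * (J - 1) by rewrite natrM /J -[j.+2]addn1 natrD addrK.
exact: psi_step_succ.
Qed.

End Psi.

Lemma psi_start (R : realFieldType) n k : (0 < k)%N ->
  psi (n%:R * (k.+1%:R / (2 * k)%:R)) k n = -1 :> R.
Proof. by case: k => // k _; rewrite /= subrr sub0r minxx. Qed.

Lemma sum_notin_const (V : nmodType) (T : finType) (Q : {set T}) (x : V) :
  \sum_(b | b \notin Q) x = x *+ #|~: Q|.
Proof. by rewrite sumr_const; congr (_ *+ _); apply: eq_card => b; rewrite !inE. Qed.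

Lemma sum_notin_indicator (R : pzSemiRingType) (T : finType) (Q P : {set T}) :
  \sum_(b | b \notin Q) ((b \in P)%:R : R) = #|P :\: Q|%:R.
Proof.
rewrite (eq_bigr (fun b => if b \in P then 1 else 0)) => [|b _]; last by case: (b \in P).
by rewrite -big_mkcondr sumr_const; congr (_ *+ _); apply: eq_card => b; rewrite !inE.
Qed.

Lemma sum_indicator_eq (R : pzSemiRingType) (T : finType) (P : pred T) (a : T) :
  \sum_(b | P b) ((a == b)%:R : R) = (P a)%:R.
Proof.
rewrite big_mkcond (bigD1 a) //= eqxx big1 ?addr0 => [|b /negbTE ba].
  by case: (P a).
by rewrite eq_sym ba; case: (P b).
Qed.

Section DeterministicAlgorithm.
Variables (n : nat) (A : detalg n).

Definition queried (h : transcript n) : {set 'I_n} := [set:: [seq e.1.1 | e <- h]].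

Definition queried_next (t : nat) (h : transcript n) : {set 'I_n} :=
  queried h :|: [set:: [seq q.1 | q <- dround A t h]].

Definition queried_by (t : nat) (s : {perm 'I_n}) : {set 'I_n} := queried (run A s t).

Definition new_count (t : nat) (h : transcript n) : nat := #|queried_next t h :\: queried h|.

Definition unqueried_count (h : transcript n) : nat := #|~: queried h|.

Lemma queried_cat h h' : queried (h ++ h') = queried h :|: queried h'.
Proof. by apply/setP => j; rewrite !inE map_cat mem_cat. Qed.

Lemma queried_by_succ t s : queried_by t.+1 s = queried_next t (run A s t).
Proof.
rewrite /queried_by /= queried_cat; congr (_ :|: _).
by apply/setP => j; rewrite !inE -map_comp.
Qed.

Lemma queried_by_subS t s : queried_by t s \subset queried_by t.+1 s.
Proof. by rewrite queried_by_succ /queried_next finset.subsetUl. Qed.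

Lemma card_queried_by_succ t s :
  #|queried_by t.+1 s| = (#|queried_by t s| + new_count t (run A s t))%N.
Proof.
rewrite /new_count -queried_by_succ cardsD (finset.setIidPr (queried_by_subS t s)).
by rewrite subnKC // subset_leq_card // queried_by_subS.
Qed.

Lemma unqueried_count_succ t s : unqueried_count (run A s t.+1) =
  (unqueried_count (run A s t) - new_count t (run A s t))%N.
Proof.
have := cardsC (queried_by t s); have := cardsC (queried_by t.+1 s).
rewrite card_queried_by_succ /unqueried_count -/(queried_by t s) -/(queried_by t.+1 s).
lia.
Qed.

Lemma new_count_le t s : (new_count t (run A s t) <= unqueried_count (run A s t))%N.
Proof. by apply: subset_leq_card; apply/fintype.subsetP => b; rewrite !inE => /andP[]. Qed.

Lemma card_queried_le_size h : (#|queried h| <= size h)%N.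
Proof.
rewrite -(size_map (fun e => e.1.1)); apply: leq_trans (card_size _).
by apply: subset_leq_card; apply/fintype.subsetP => b; rewrite inE.
Qed.

Lemma run_tperm t s a b : a \notin queried_by t s -> b \notin queried_by t s ->
  run A (tperm a b * s)%g t = run A s t.
Proof.
elim: t => [//|t IH] Ha Hb.
have notin_prev x : x \notin queried_by t.+1 s -> x \notin queried_by t s.
  by apply: contra; apply/fintype.subsetP/queried_by_subS.
rewrite /= IH ?notin_prev //; congr (_ ++ _); apply/eq_in_map => q q_asked.
have q_queried : q.1 \in queried_by t.+1 s.
  by rewrite queried_by_succ !inE; apply/orP; right; apply: map_f.
rewrite /answer_of /rank permM tpermD //.
  by apply: contraNneq Ha => ->.
by apply: contraNneq Hb => ->.
Qed.

Variable v : 'I_n.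

Definition target (s : {perm 'I_n}) : 'I_n := (s^-1)%g v.

Definition hidden (t : nat) (s : {perm 'I_n}) : bool := target s \notin queried_by t s.

Lemma target_tperm s a b : target (tperm a b * s)%g = tperm a b (target s).
Proof. by rewrite /target invMg tpermV permM. Qed.

Lemma hidden_succ t s : hidden t.+1 s = hidden t s && (target s \notin queried_by t.+1 s).
Proof.
rewrite /hidden; have [_|not_found] := boolP (target s \in queried_by t.+1 s).
  by rewrite andbF.
rewrite /= andbT; apply/esym; apply: contra not_found.
exact/fintype.subsetP/queried_by_subS.
Qed.

Lemma hidden0 s : hidden 0 s.
Proof. by rewrite /hidden inE. Qed.

Lemma unqueried_count_gt0 t s : hidden t s -> (0 < unqueried_count (run A s t))%N.
Proof. by move=> Ht; rewrite card_gt0; apply/set0Pn; exists (target s); rewrite inE. Qed.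

(* Conditioned on the transcript, a hidden target is exchangeable with every
   unqueried position. *)
Lemma sum_swap_target (V : nmodType) t (F : transcript n -> 'I_n -> 'I_n -> V) :
  \sum_(s | hidden t s) \sum_(b | b \notin queried_by t s) F (run A s t) (target s) b =
  \sum_(s | hidden t s) \sum_(b | b \notin queried_by t s) F (run A s t) b (target s).
Proof.
rewrite !pair_big_dep /=.
pose swap (p : {perm 'I_n} * 'I_n) := ((tperm (target p.1) p.2 * p.1)%g, target p.1).
have swapK : involutive swap.
  move=> [s b]; rewrite /swap /= target_tperm tpermL; congr pair.
  by rewrite mulgA tpermC; apply/permP => x; rewrite !permM tpermK.
pose good p := hidden t p.1 && (p.2 \notin queried_by t p.1).
have swap_run p : good p -> run A (swap p).1 t = run A p.1 t.
  by case/andP => ? ?; apply: run_tperm.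
have swap_good p : good p -> good (swap p).
  move=> gp; rewrite /good /hidden /queried_by swap_run //=.
  by rewrite target_tperm tpermL -/(queried_by t p.1) andbC.
rewrite (reindex_inj (inv_inj swapK)); apply: eq_big => [p|p /swap_good].
  by apply/idP/idP => [/swap_good|/swap_good]; rewrite ?swapK.
by rewrite swapK => gp; rewrite swap_run //= target_tperm tpermL.
Qed.

Lemma sum_hidden_new_count (R : pzSemiRingType) t (X : transcript n -> R) :
  \sum_(s | hidden t s) X (run A s t) * (new_count t (run A s t))%:R =
  \sum_(s | hidden t s && (target s \in queried_by t.+1 s))
     X (run A s t) * (unqueried_count (run A s t))%:R.
Proof.
transitivity (\sum_(s | hidden t s) \sum_(b | b \notin queried_by t s)
                X (run A s t) * (b \in queried_next t (run A s t))%:R).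
  by apply: eq_bigr => s _; rewrite /new_count -sum_notin_indicator mulr_sumr.
rewrite (sum_swap_target t (fun h _ y => X h * (y \in queried_next t h)%:R)) /=.
rewrite big_mkcondr; apply: eq_bigr => s _; rewrite sum_notin_const -queried_by_succ.
case: (target s \in _); first by rewrite mulr1 mulr_natr.
by rewrite mulr0n mulr0 mul0rn.
Qed.

Lemma sum_hidden_success_le (R : numFieldType) t :
  \sum_(s | hidden t s && (dout A (run A s t) == target s)) (1 : R) <=
  \sum_(s | hidden t s) (unqueried_count (run A s t))%:R^-1.
Proof.
have -> : \sum_(s | hidden t s && (dout A (run A s t) == target s)) (1 : R) =
          \sum_(s | hidden t s) \sum_(b | b \notin queried_by t s)
            (dout A (run A s t) == target s)%:R / (unqueried_count (run A s t))%:R.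
  rewrite big_mkcondr; apply: eq_bigr => s hs.
  have u_neq0 : (unqueried_count (run A s t))%:R != 0 :> R.
    by rewrite pnatr_eq0 -lt0n (unqueried_count_gt0 hs).
  rewrite sum_notin_const -[_ *+ #|_|]mulr_natr mulfVK //.
  by case: (_ == _).
rewrite (sum_swap_target t (fun h x _ => (dout A h == x)%:R / (unqueried_count h)%:R)).
apply: ler_sum => s _; rewrite -mulr_suml.
by rewrite ler_piMl ?invr_ge0 ?ler0n // sum_indicator_eq; case: (_ \notin _).
Qed.

Lemma sum_success_le (R : numFieldType) t :
  \sum_s ((dout A (run A s t) == target s)%:R : R) <=
  \sum_s (if hidden t s then (unqueried_count (run A s t))%:R^-1 else 1).
Proof.
rewrite [X in X <= _](bigID (hidden t)) [X in _ <= X](bigID (hidden t)) /=.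
apply: lerD.
  rewrite [X in _ <= X](eq_bigr (fun s => (unqueried_count (run A s t))%:R^-1)) => [|s ->] //.
  apply: le_trans (sum_hidden_success_le R t); rewrite big_mkcondr /=.
  by apply: ler_sum => s _; case: (_ == _).
by apply: ler_sum => s /negbTE ->; case: (_ == _); rewrite ?ler01.
Qed.

Definition hidden_cost (t : nat) (s : {perm 'I_n}) : nat :=
  \sum_(i < t | hidden i s) new_count i (run A s i).

Lemma hidden_cost_succ t s : hidden_cost t.+1 s =
  (hidden_cost t s + if hidden t s then new_count t (run A s t) else 0)%N.
Proof. by rewrite /hidden_cost big_mkcond big_ord_recr -big_mkcond. Qed.

Lemma hidden_cost_le t s : (hidden_cost t s <= #|queried_by t s|)%N.
Proof.
elim: t => [|t IH]; first by rewrite /hidden_cost big_ord0.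
by rewrite hidden_cost_succ card_queried_by_succ leq_add //; case: (hidden t s).
Qed.

Variables (R : realFieldType) (k : nat) (c : R).

Definition potential (t : nat) (s : {perm 'I_n}) : R :=
  (hidden_cost t s)%:R +
  if hidden t s then psi c (k - t) (unqueried_count (run A s t)) else - c.

Lemma potential0 s : potential 0 s = psi c k n.
Proof.
rewrite /potential /hidden_cost big_ord0 hidden0 subn0 add0r; congr (psi c k _).
by rewrite -[RHS]card_ord; apply: eq_card => j; rewrite !inE.
Qed.

Lemma potential_final s : potential k s =
  (hidden_cost k s)%:R - c * (if hidden k s then (unqueried_count (run A s k))%:R^-1 else 1).
Proof. by rewrite /potential subnn; case: (hidden k s) => /=; rewrite ?mulr1 ?mulNr. Qed.

Lemma sum_potential_le_succ t : (t < k)%N -> \sum_s potential t s <= \sum_s potential t.+1 s.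
Proof.
move=> tk; rewrite -subr_ge0 -sumrB.
set j := (k - t.+1)%N; have kt : (k - t = j.+1)%N by rewrite /j subnS prednK // subn_gt0.
(* By [sum_hidden_new_count], finding the target in round [t] may be weighted
   by [new_count / unqueried_count] instead. *)
pose X h : R := (- c - psi c j (unqueried_count h - new_count t h)) / (unqueried_count h)%:R.
have diff s : potential t.+1 s - potential t s =
    (if hidden t s then (new_count t (run A s t))%:R
       - psi c j.+1 (unqueried_count (run A s t))
       + psi c j (unqueried_count (run A s t) - new_count t (run A s t)) else 0)
  + (if hidden t s && (target s \in queried_by t.+1 s)
     then X (run A s t) * (unqueried_count (run A s t))%:R else 0).
  rewrite /potential hidden_cost_succ hidden_succ unqueried_count_succ -/j kt.
  case hs: (hidden t s) => /=; last by rewrite addn0 addr0 subrr.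
  have u_neq0 : (unqueried_count (run A s t))%:R != 0 :> R.
    by rewrite pnatr_eq0 -lt0n (unqueried_count_gt0 hs).
  rewrite natrD; case: (target s \in _) => /=; last by lra.
  by rewrite /X mulfVK //; lra.
rewrite (eq_bigr _ (fun s _ => diff s)) big_split /= -!big_mkcond /=.
rewrite -(sum_hidden_new_count t X) -big_split /=.
apply: sumr_ge0 => s hs.
have /= := psi_step c j (unqueried_count_gt0 hs) (new_count_le t s).
rewrite /X; lra.
Qed.

Lemma sum_potential0_le t : (t <= k)%N -> \sum_s potential 0 s <= \sum_s potential t s.
Proof.
elim: t => [//|t IH] tk.
exact: le_trans (IH (ltnW tk)) (sum_potential_le_succ tk).
Qed.

Lemma sum_success_tradeoff : 0 <= c ->
  c * \sum_s ((dout A (run A s k) == target s)%:R : R) <=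
  \sum_s (cost k A s)%:R - psi c k n *+ #|{perm 'I_n}|.
Proof.
move=> c0; apply: le_trans (ler_wpM2l c0 (sum_success_le R k)) _.
have start := sum_potential0_le (leqnn k).
rewrite (eq_bigr _ (fun s _ => potential0 s)) sumr_const in start.
have cost_ge : \sum_s (hidden_cost k s)%:R <= \sum_s (cost k A s)%:R :> R.
  apply: ler_sum => s _; rewrite ler_nat (leq_trans (hidden_cost_le k s)) //.
  exact: card_queried_le_size.
have final s : c * (if hidden k s then (unqueried_count (run A s k))%:R^-1 else 1) =
    (hidden_cost k s)%:R - potential k s.
  by rewrite potential_final opprB addrC subrK.
rewrite mulr_sumr (eq_bigr _ (fun s _ => final s)) sumrB; lra.
Qed.

End DeterministicAlgorithm.

Lemma succeedsE n k r (A : detalg n) (rn : (r.-1 < n)%N) s : (0 < r)%N ->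
  succeeds k r A s = (dout A (run A s k) == target (Ordinal rn) s).
Proof.
move=> r0; rewrite /succeeds /rank /target -(inj_eq (@perm_inj _ s)) permKV -val_eqE /=.
by rewrite -[in LHS](prednK r0).
Qed.

Lemma sum_succeeds_bound (R : realFieldType) n k r (A : detalg n) :
  (0 < k)%N -> (1 <= r <= n)%N ->
  n%:R * (k.+1%:R / (2 * k)%:R) * \sum_s ((succeeds k r A s)%:R : R) <=
  \sum_s (cost k A s)%:R + #|{perm 'I_n}|%:R.
Proof.
move=> k0 /andP[r0 rn]; have rn' : (r.-1 < n)%N by rewrite prednK.
under eq_bigr => s _ do rewrite (succeedsE k A rn' s r0).
apply: le_trans (sum_success_tradeoff _ _ _ _) _.
  by rewrite mulr_ge0 ?divr_ge0 ?ler0n.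
by rewrite psi_start // mulNrn opprK.
Qed.

Section Expectation.
Local Open Scope ereal_scope.

Lemma sum_nneseriesEFin (R : realType) (T : finType) (F : T -> nat -> R) :
  (forall s i, (0 <= F s i)%R) ->
  \sum_s \sum_(i <oo) (F s i)%:E = \sum_(i <oo) (\sum_s F s i)%:E.
Proof.
move=> F0; rewrite -nneseries_sum; last by move=> s i _; rewrite lee_fin.
by apply: eq_eseriesr => i _; rewrite sumEFin.
Qed.

Lemma nneseries_mix_le (R : realType) (T : finType) (w : nat -> R) (a b : nat -> T -> R)
    (c d : R) :
  (forall i, 0 <= w i)%R -> \sum_(i <oo) (w i)%:E = 1 ->
  (forall i s, 0 <= a i s)%R -> (forall i s, 0 <= b i s)%R -> (0 <= c)%R -> (0 <= d)%R ->
  (forall i, c * \sum_s a i s <= \sum_s b i s + d)%R ->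
  c%:E * \sum_s \sum_(i <oo) (w i * a i s)%:E <=
  \sum_s \sum_(i <oo) (w i * b i s)%:E + d%:E.
Proof.
move=> w0 w1 a0 b0 c0 d0 ab.
rewrite !sum_nneseriesEFin => [|s i|s i]; try exact: mulr_ge0.
have -> : d%:E = \sum_(i <oo) (d * w i)%:E.
  rewrite (eq_eseriesr (fun i _ => EFinM _ _)) nneseriesZl ?w1 ?mule1 // => i _.
  by rewrite lee_fin.
rewrite -nneseriesD => [|i _ _|i _ _]; last 2 first.
- by rewrite lee_fin sumr_ge0 // => s _; rewrite mulr_ge0.
- by rewrite lee_fin mulr_ge0.
rewrite -nneseriesZl => [|i _]; last by rewrite lee_fin sumr_ge0 // => s _; rewrite mulr_ge0.
apply: lee_nneseries => [i _ _|i _].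
  by rewrite -EFinM lee_fin mulr_ge0 // sumr_ge0 // => s _; rewrite mulr_ge0.
rewrite -EFinM -EFinD lee_fin -!mulr_sumr mulrCA [(d * _)%R]mulrC -mulrDr.
exact: ler_wpM2l.
Qed.

Lemma exists_sum_le_mulrn (R : realType) (T : finType) (x0 : T) (e : T -> \bar R) :
  exists s, \sum_t e t <= e s *+ #|T|.
Proof.
have [s _ smax] := @arg_maxP _ _ _ x0 xpredT e isT.
exists s; have -> : e s *+ #|T| = \sum_(t : T) e s by rewrite sumr_const.
by apply: lee_sum => t _; exact: smax.
Qed.

Lemma lee_mean_bound (R : realType) (N : nat) (c p : R) (S1 S2 e : \bar R) :
  (0 < N)%N -> (0 <= c)%R -> 0 <= e ->
  (N%:R * p)%:E <= S1 -> c%:E * S1 <= S2 + N%:R%:E -> S2 <= e *+ N ->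
  (c * p - 1)%:E <= e.
Proof.
move=> N0 c0 e0 S1_ge tradeoff S2_le.
case: e e0 S2_le => [x| |] //= _ S2_le; last by rewrite leey.
have cE0 : 0 <= c%:E by rewrite lee_fin.
have := le_trans (le_trans (lee_wpmul2l cE0 S1_ge) tradeoff) (leeD S2_le (lexx _)).
rewrite -EFinM -EFin_natmul -EFinD lee_fin -mulr_natr => bound.
have N0R : (0 < N%:R :> R)%R by rewrite ltr0n.
have : (N%:R * (c * p) <= N%:R * (x + 1))%R by lra.
by rewrite ler_pM2l // lee_fin; lra.
Qed.

End Expectation.

Lemma sum_success_prob_tradeoff (R : realType) n k r (B : randalg R n) :
  (0 < k)%N -> (1 <= r <= n)%N ->
  ((n%:R * (k.+1%:R / (2 * k)%:R))%:E * \sum_s success_prob k r B s <=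
   \sum_s expected_cost k B s + #|{perm 'I_n}|%:R%:E)%E.
Proof.
move=> k0 hr; apply: nneseries_mix_le (rweight_ge0 B) (rweight_sum1 B) _ _ _ _ _.
- by move=> i s; rewrite ler0n.
- by move=> i s; rewrite ler0n.
- by rewrite mulr_ge0 ?divr_ge0 ?ler0n.
- by rewrite ler0n.
- by move=> i; exact: sum_succeeds_bound.
Qed.

Theorem proposition13 (R : realType) (n k r : nat) (p : R)
  (hk : (0 < k)%N) (hr : (1 <= r <= n)%N) (B : randalg R n) :
  (forall sigma : {perm 'I_n}, (p%:E <= success_prob k r B sigma)%E) ->
  exists sigma : {perm 'I_n},
    ((n%:R * p * ((k.+1)%:R / (2 * k)%:R) - 1)%:E <= expected_cost k B sigma)%E.
Proof.
move=> Hp; have [s cost_le] := exists_sum_le_mulrn 1%g (expected_cost k B).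
exists s; rewrite mulrAC.
apply: (lee_mean_bound _ _ _ _ (sum_success_prob_tradeoff B hk hr) cost_le).
- by apply/card_gt0P; exists 1%g.
- by rewrite mulr_ge0 ?divr_ge0 ?ler0n.
- by apply: nneseries_ge0 => i _ _; rewrite lee_fin mulr_ge0 ?rweight_ge0 ?ler0n.
- rewrite mulr_natl -sumr_const -sumEFin.
  by apply: lee_sum => s' _; exact: Hp.
Qed.
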